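(* Let ${\cal C}$ be a semi-degenerate congruence-modular variety and $A\in{\cal C}$ a semiprime algebra. For any nonzero cardinal $\kappa$, the conditions $(iv)_{{\rm Con}(A)}$, $(4)_{\kappa,{\rm Con}(A)}$, $(4)_{<\infty,{\rm Con}(A)}$ and $(4)_{{\rm Con}(A)}$ are equivalent.
   Context: ${\cal C}$ semi-degenerate: no nontrivial member has a one-element subalgebra. ${\rm Con}(A)$: congruence lattice with bounds $\Delta_A,\nabla_A=A^2$; $[\cdot,\cdot]_A$: modular commutator. A congruence $\phi\ne\nabla_A$ is prime if $[\theta,\zeta]_A\subseteq\phi$ implies $\theta\subseteq\phi$ or $\zeta\subseteq\phi$. $\rho_A(\theta)$: intersection of all prime congruences containing $\theta$. $A$ semiprime: $\rho_A(\Delta_A)=\Delta_A$. For a bounded lattice $L$: ${\rm Ann}_L(U)=\{x\in L\mid x\wedge u=0\ \forall u\in U\}$, ${\rm Ann}_L(a)={\rm Ann}_L(\{a\})$, $(V]_L$ the ideal generated by $V$. $(iv)_L$: for all $a,b\in L$, ${\rm Ann}_L(a\wedge b)=({\rm Ann}_L(a)\cup{\rm Ann}_L(b)]_L$. $(4)_{\kappa,L}$: $(iv)_L$ holds and for each $U\subseteq L$ with $|U|\le\kappa$ there is $x\in L$ with ${\rm Ann}_L({\rm Ann}_L(U))={\rm Ann}_L(x)$; $(4)_{<\infty,L}$: the same for all finite $U$; $(4)_L$: the same for all $U\subseteq L$. *)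

From Stdlib Require Import List.
Import ListNotations.


Record signature := Signature { op : Type; arity : op -> nat }.

Definition args (n : nat) := { i : nat | i < n }.

Record algebra (S : signature) := Algebra {
  carrier :> Type;
  interp : forall f : op S, (args (arity S f) -> carrier) -> carrier }.
Arguments interp {S} a f _.

Inductive term (S : signature) (V : Type) : Type :=
| Var : V -> term S V
| App : forall f : op S, (args (arity S f) -> term S V) -> term S V.
Arguments Var {S V} _.
Arguments App {S V} f _.

Fixpoint eval {S : signature} {V : Type} (A : algebra S) (v : V -> A)
  (t : term S V) : A :=
  match t with
  | Var x => v x
  | App f ts => interp A f (fun i => eval A v (ts i))
  end.

(** Varieties, given as equational classes (Birkhoff): a set of identities. *)
Definition identities (S : signature) := term S nat -> term S nat -> Prop.

Definition in_variety {S} (Sigma : identities S) (A : algebra S) : Prop :=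
  forall s t, Sigma s t -> forall v : nat -> A, eval A v s = eval A v t.

Definition rel (A : Type) := A -> A -> Prop.
Definition subrel {A} (r s : rel A) : Prop := forall x y, r x y -> s x y.
Definition releq {A} (r s : rel A) : Prop := forall x y, r x y <-> s x y.
Definition Delta (A : Type) : rel A := fun x y => x = y.
Definition Nabla (A : Type) : rel A := fun _ _ => True.

Definition is_con {S} (A : algebra S) (th : rel A) : Prop :=
  (forall x, th x x) /\ (forall x y, th x y -> th y x) /\
  (forall x y z, th x y -> th y z -> th x z) /\
  (forall f (u w : args (arity S f) -> A),
      (forall i, th (u i) (w i)) -> th (interp A f u) (interp A f w)).

Definition cmeet {A : Type} (a b : rel A) : rel A := fun x y => a x y /\ b x y.
Definition cjoin {S} (A : algebra S) (a b : rel A) : rel A :=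
  fun x y => forall g, is_con A g -> subrel a g -> subrel b g -> g x y.
(** join of a finite list of congruences (the empty join is Delta_A) *)
Definition cbigjoin {S} (A : algebra S) (s : list (rel A)) : rel A :=
  fun x y => forall g, is_con A g -> (forall a, In a s -> subrel a g) -> g x y.

Definition con_modular {S} (A : algebra S) : Prop :=
  forall a b c, is_con A a -> is_con A b -> is_con A c -> subrel a c ->
    releq (cjoin A a (cmeet b c)) (cmeet (cjoin A a b) c).

Definition congruence_modular {S} (Sigma : identities S) : Prop :=
  forall B : algebra S, in_variety Sigma B -> con_modular B.

(** Semi-degenerate: no nontrivial member has a one-element subalgebra. *)
Definition semi_degenerate {S} (Sigma : identities S) : Prop :=
  forall B : algebra S, in_variety Sigma B -> (exists x y : B, x <> y) ->
    ~ (exists e : B, forall f, interp B f (fun _ => e) = e).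

Definition centralizes {S} (A : algebra S) (a b d : rel A) : Prop :=
  forall (t : term S (nat + nat)) (p q u w : nat -> A),
    (forall i, a (p i) (q i)) -> (forall j, b (u j) (w j)) ->
    d (eval A (fun z => match z with inl i => p i | inr j => u j end) t)
      (eval A (fun z => match z with inl i => p i | inr j => w j end) t) ->
    d (eval A (fun z => match z with inl i => q i | inr j => u j end) t)
      (eval A (fun z => match z with inl i => q i | inr j => w j end) t).

Definition commutator {S} (A : algebra S) (a b : rel A) : rel A :=
  fun x y => forall d, is_con A d -> centralizes A a b d -> d x y.

Definition prime_con {S} (A : algebra S) (phi : rel A) : Prop :=
  is_con A phi /\ ~ releq phi (Nabla A) /\
  forall th ze, is_con A th -> is_con A ze ->
    subrel (commutator A th ze) phi -> subrel th phi \/ subrel ze phi.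

Definition rho {S} (A : algebra S) (th : rel A) : rel A :=
  fun x y => forall phi, prime_con A phi -> subrel th phi -> phi x y.

Definition semiprime {S} (A : algebra S) : Prop := releq (rho A (Delta A)) (Delta A).

Definition cset {S} (A : algebra S) := rel A -> Prop.
Definition seteq {S} {A : algebra S} (P Q : cset A) : Prop := forall r, P r <-> Q r.
Definition in_Con {S} (A : algebra S) (U : cset A) : Prop :=
  forall u, U u -> is_con A u.

Definition Ann {S} (A : algebra S) (U : cset A) : cset A :=
  fun x => is_con A x /\ forall u, U u -> releq (cmeet x u) (Delta A).
Definition Ann1 {S} (A : algebra S) (a : rel A) : cset A :=
  Ann A (fun u => u = a).
Definition ideal_gen {S} (A : algebra S) (V : cset A) : cset A :=
  fun x => is_con A x /\ exists s : list (rel A),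
     (forall v, In v s -> V v) /\ subrel x (cbigjoin A s).

Definition cond_iv {S} (A : algebra S) : Prop :=
  forall a b, is_con A a -> is_con A b ->
    seteq (Ann1 A (cmeet a b)) (ideal_gen A (fun x => Ann1 A a x \/ Ann1 A b x)).

Definition annann_principal {S} (A : algebra S) (U : cset A) : Prop :=
  exists x, is_con A x /\ seteq (Ann A (Ann A U)) (Ann1 A x).

(** |U| <= |K| : U is covered by a family indexed by K (K is nonempty below). *)
Definition card_le {S} {A : algebra S} (U : cset A) (K : Type) : Prop :=
  exists g : K -> rel A, forall u, U u -> exists k, g k = u.

Definition finite_set {S} {A : algebra S} (U : cset A) : Prop :=
  exists s : list (rel A), forall u, U u -> In u s.

Definition cond4_kappa {S} (A : algebra S) (K : Type) : Prop :=
  cond_iv A /\ forall U, in_Con A U -> card_le U K -> annann_principal A U.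
Definition cond4_fin {S} (A : algebra S) : Prop :=
  cond_iv A /\ forall U, in_Con A U -> finite_set U -> annann_principal A U.
Definition cond4_all {S} (A : algebra S) : Prop :=
  cond_iv A /\ forall U, in_Con A U -> annann_principal A U.

(** In a semiprime algebra, if [r] meets every member of a family [W] of
    congruences trivially, then it meets their join trivially.  Indeed,
    [[r, w] <= r /\ w = Delta] puts [r] or [w] below each prime congruence
    [phi]; so either [r <= phi] or the whole join lies below [phi], and
    [r /\ \/W] lies in the intersection of all primes, which is [Delta].
    Hence [Ann(Ann U) = Ann(\/ Ann U)] is principal for every [U], and each
    condition (4) collapses to (iv). *)

From Stdlib Require Import Classical.

Section CongruenceLattice.

Variables (S : signature) (A : algebra S).

Lemma con_eval (th : rel A) (V : Type) (v1 v2 : V -> A) (t : term S V) :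
  is_con A th -> (forall z, th (v1 z) (v2 z)) -> th (eval A v1 t) (eval A v2 t).
Proof.
  intros (_ & _ & _ & Hop) Hv.
  induction t as [z|f ts IH]; simpl; auto.
Qed.

Lemma cmeet_con (a b : rel A) : is_con A a -> is_con A b -> is_con A (cmeet a b).
Proof.
  intros (Ra & Sa & Ta & Oa) (Rb & Sb & Tb & Ob); unfold cmeet.
  split; [|split; [|split]].
  - intro x; auto.
  - intros x y []; auto.
  - intros x y z [] []; eauto.
  - intros f u w H; split; [apply Oa|apply Ob]; intro i; apply H.
Qed.

Lemma commutator_sub_cmeet (a b : rel A) :
  is_con A a -> is_con A b -> subrel (commutator A a b) (cmeet a b).
Proof.
  intros Ha Hb x y Hxy; apply Hxy; [now apply cmeet_con|].
  intros t p q u w Hp Hu [Hpa _]; pose proof Ha as (Ra & Sa & Ta & _).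
  (* [t(q,u) ~a t(p,u) ~a t(p,w) ~a t(q,w)], while [t(q,u) ~b t(q,w)] directly. *)
  split.
  - apply Ta with (eval A (fun z => match z with inl i => p i | inr j => u j end) t).
    { apply con_eval; [exact Ha|]. intros [i|j]; [apply Sa, Hp|apply Ra]. }
    apply Ta with (eval A (fun z => match z with inl i => p i | inr j => w j end) t);
      [exact Hpa|].
    apply con_eval; [exact Ha|]. intros [i|j]; [apply Hp|apply Ra].
  - apply con_eval; [exact Hb|]. pose proof Hb as (Rb & _).
    intros [i|j]; [apply Rb|apply Hu].
Qed.

Definition cjoin_set (W : cset A) : rel A :=
  fun x y => forall g, is_con A g -> (forall w, W w -> subrel w g) -> g x y.

Lemma cjoin_set_con (W : cset A) : is_con A (cjoin_set W).
Proof.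
  unfold cjoin_set; split; [|split; [|split]].
  - intros x g (Rg & _) _; apply Rg.
  - intros x y H g Hg Hw; pose proof Hg as (_ & Sg & _); apply Sg, H; assumption.
  - intros x y z H1 H2 g Hg Hw; pose proof Hg as (_ & _ & Tg & _).
    apply Tg with y; [apply H1|apply H2]; assumption.
  - intros f u w H g Hg Hw; pose proof Hg as (_ & _ & _ & Og).
    apply Og; intro i; apply H; assumption.
Qed.

Lemma cjoin_set_ub (W : cset A) (w : rel A) : W w -> subrel w (cjoin_set W).
Proof. intros Hw x y Hxy g _ Hg; exact (Hg w Hw x y Hxy). Qed.

Definition disjoint (r s : rel A) : Prop := forall x y, r x y -> s x y -> x = y.

Lemma cmeet_Delta (r s : rel A) :
  is_con A r -> is_con A s -> releq (cmeet r s) (Delta A) <-> disjoint r s.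
Proof.
  intros Hr Hs; split.
  - intros E x y Hx Hy; now apply E.
  - intros D x y; split; [intros [Hx Hy]; exact (D x y Hx Hy)|].
    unfold Delta; intros <-; split; [apply (proj1 Hr)|apply (proj1 Hs)].
Qed.

Lemma Ann_disjoint (U : cset A) (x : rel A) : in_Con A U ->
  Ann A U x <-> is_con A x /\ forall u, U u -> disjoint x u.
Proof.
  intros HU; split; intros [Hx Hu]; split; try exact Hx;
    intros u Uu; apply (cmeet_Delta x u Hx (HU u Uu)); auto.
Qed.

Lemma Ann_con (U : cset A) : in_Con A (Ann A U).
Proof. intros x Hx; apply Hx. Qed.

Lemma prime_con_disjoint (phi r s : rel A) : prime_con A phi ->
  is_con A r -> is_con A s -> disjoint r s -> subrel r phi \/ subrel s phi.
Proof.
  intros (Hphi & _ & Hprime) Hr Hs D; apply Hprime; auto.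
  intros x y Hxy; destruct (commutator_sub_cmeet r s Hr Hs x y Hxy) as [Hx Hy].
  rewrite (D x y Hx Hy); apply (proj1 Hphi).
Qed.

Lemma disjoint_cjoin_set (r : rel A) (W : cset A) :
  semiprime A -> is_con A r -> in_Con A W ->
  (forall w, W w -> disjoint r w) -> disjoint r (cjoin_set W).
Proof.
  intros Hsp Hr HW D x y Hx Hy; apply (proj1 (Hsp x y)); intros phi Hphi _.
  destruct (classic (subrel r phi)) as [Hrphi|Hrphi]; [now apply Hrphi|].
  apply Hy; [apply (proj1 Hphi)|]; intros w Hw.
  destruct (prime_con_disjoint phi r w Hphi Hr (HW w Hw) (D w Hw)) as [H|H];
    [contradiction|exact H].
Qed.

Lemma Ann_Ann_principal (U : cset A) :
  semiprime A -> seteq (Ann A (Ann A U)) (Ann1 A (cjoin_set (Ann A U))).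
Proof.
  intros Hsp r; unfold Ann1.
  assert (Hsing : in_Con A (fun u => u = cjoin_set (Ann A U)))
    by (intros u ->; apply cjoin_set_con).
  rewrite (Ann_disjoint _ r (Ann_con U)), (Ann_disjoint _ r Hsing).
  split; intros [Hr D]; split; auto.
  - intros u ->; apply disjoint_cjoin_set; auto using Ann_con.
  - intros w Hw x y Hx Hy.
    exact (D _ eq_refl x y Hx (cjoin_set_ub _ w Hw x y Hy)).
Qed.

Lemma semiprime_annann_principal (U : cset A) :
  semiprime A -> annann_principal A U.
Proof.
  intros Hsp; exists (cjoin_set (Ann A U)).
  split; [apply cjoin_set_con|now apply Ann_Ann_principal].
Qed.

End CongruenceLattice.

Theorem proposition2p27 (S : signature) (Sigma : identities S)
  (HCM : congruence_modular Sigma) (Hsd : semi_degenerate Sigma)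
  (A : algebra S) (HA : in_variety Sigma A) (Hsp : semiprime A)
  (K : Type) (k0 : K) :
  (cond_iv A <-> cond4_kappa A K) /\
  (cond_iv A <-> cond4_fin A) /\
  (cond_iv A <-> cond4_all A).
Proof.
  pose proof (fun U => semiprime_annann_principal S A U Hsp) as Hann.
  unfold cond4_kappa, cond4_fin, cond4_all.
  split; [|split]; split; try (intros [Hiv _]; exact Hiv);
    intros Hiv; split; auto.
Qed.
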